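(* For a word $w$ over $[n]$, the following are equivalent: (1) $w$ is $n$-complete; (2) $w$ synchronizes every member of $\mathcal{F}(n)$; (3) $w$ synchronizes every member of $\mathcal{F}^+(n)$; (4) $w$ synchronizes every member of $\mathcal{A}(n)$.
   Context: A Boolean network (BN) with component set $[n]$ is $f:\{0,1\}^n\to\{0,1\}^n$; its signed interaction digraph has vertex set $[n]$ and a positive (negative) arc from $j$ to $i$ iff for some $x$ with $x_j=0$, $f_i(x+e_j)-f_i(x)$ is positive (negative). Cycles have no repeated vertices (loops are cycles), signed by the product of arc signs. $\mathcal{A}(n)$: BNs with component set $[n]$ whose interaction digraph is acyclic. $\mathcal{F}(n)$: BNs with component set $[n]$ with a unique fixed point and such that all cycles of the signed interaction digraph have the same sign. $\mathcal{F}^+(n)$: synchronizing BNs with component set $[n]$ whose signed interaction digraph has no negative cycles. A word $u$ contains $v$ if $v$ is obtained by deleting letters of $u$; $w$ is $n$-complete if it contains every permutation of $[n]$. $f^i(x)$ is $x$ with $x_i$ replaced by $f_i(x)$; $f^{i_1\cdots i_\ell}=f^{i_\ell}\circ\cdots\circ f^{i_1}$; $w$ synchronizes $f$ if $f^w$ is constant; $f$ is synchronizing if some word synchronizes it. *)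

From mathcomp Require Import all_boot.
Set Implicit Arguments. Unset Strict Implicit. Unset Printing Implicit Defensive.

(* Configurations x in {0,1}^n, components indexed by 'I_n (= [n]). *)
Definition conf (n : nat) := {ffun 'I_n -> bool}.

Definition BN (n : nat) := conf n -> conf n.

Definition setc n (x : conf n) (i : 'I_n) (b : bool) : conf n :=
  [ffun k => if k == i then b else x k].

(* Signed arcs of the interaction digraph: arc of sign s (true = positive,
   false = negative) from j to i iff for some x with x_j = 0,
   f_i(x+e_j) - f_i(x) is positive (resp. negative). *)
Definition arc n (f : BN n) (s : bool) (j i : 'I_n) : Prop :=
  exists x : conf n, x j = false /\
    f x i = ~~ s /\ f (setc x j true) i = s.

(* (The default d of nth is irrelevant since indices are in range.) *)
Definition is_cycle n (f : BN n) (vs : seq 'I_n) (ss : seq bool) : Prop :=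
  [/\ 0 < size vs, uniq vs, size ss = size vs &
      forall (t : nat) (d : 'I_n), t < size vs ->
        arc f (nth true ss t) (nth d vs t) (nth d vs ((t.+1) %% size vs))].

Definition cycle_sign (ss : seq bool) : bool := ~~ odd (count negb ss).

Definition fixed_point n (f : BN n) (x : conf n) : Prop := f x = x.

(* Asynchronous update f^i and f^w (f^{i1...il} = f^{il} o ... o f^{i1}). *)
Definition upd n (f : BN n) (i : 'I_n) (x : conf n) : conf n := setc x i (f x i).
Definition upd_word n (f : BN n) (w : seq 'I_n) (x : conf n) : conf n :=
  foldl (fun y i => upd f i y) x w.

Definition synchronizes n (w : seq 'I_n) (f : BN n) : Prop :=
  exists c : conf n, forall x, upd_word f w x = c.
Definition synchronizing n (f : BN n) : Prop := exists w, synchronizes w f.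

Definition in_A n (f : BN n) : Prop := forall vs ss, ~ is_cycle f vs ss.
Definition in_F n (f : BN n) : Prop :=
  (exists! x, fixed_point f x) /\
  (forall vs ss vs' ss', is_cycle f vs ss -> is_cycle f vs' ss' ->
     cycle_sign ss = cycle_sign ss').
Definition in_Fplus n (f : BN n) : Prop :=
  synchronizing f /\ (forall vs ss, is_cycle f vs ss -> cycle_sign ss = true).

(* Containment of words = subsequence; a permutation of [n] is a duplicate-free
   word of length n. *)
Definition complete n (w : seq 'I_n) : Prop :=
  forall p : seq 'I_n, uniq p -> size p = n -> subseq p w.

From Pilot Require Import Defs.
From mathcomp Require Import all_boot zify.
From Stdlib Require Import Classical.
Set Implicit Arguments. Unset Strict Implicit. Unset Printing Implicit Defensive.

(* A word containing every permutation synchronizes [f] as soon as [f] has a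
   forcing order: a permutation [pi] and a target [t] such that [f] sets [pi_k]
   to [t_(pi_k)] whenever [x] agrees with [t] on the earlier components of [pi];
   updating along an occurrence of [pi] in [w] then drives every configuration
   to [t].  Such an order is built greedily, and the construction goes on as
   long as some free component is constant on the subcube where the components
   already chosen are fixed.  If none is, every free component has an incoming
   arc inside the subcube, so the subnetwork has a cycle.  This is absurd for
   acyclic networks.  For [F(n)], comparing with the unique fixed point gives a
   positive cycle, so no cycle is negative; an initial strongly connected
   component then carries a balanced signing, and fixing it to that signing or
   to its complement yields two fixed points, by the fixed point theorem for
   networks without negative cycles (proved by the same induction).  That
   theorem also gives [F+(n) <= F(n)].  Conversely, if a permutation [p] does
   not occur in [w], the acyclic network [f_(p_0) = 1], [f_(p_(k+1)) = x_(p_k)],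
   which lies in all three classes, is not synchronized by [w]: starting from 0,
   the 1s can only travel along [p] in order. *)

Section ClosedWalks.
Variables (T : eqType) (E : bool -> T -> T -> Prop).

Definition closed_walk (h : nat -> T) (sg : nat -> bool) (p : nat) :=
  [/\ 0 < p, h p = h 0 & forall t, t < p -> E (sg t) (h t) (h t.+1)].

Definition neg_arcs (sg : nat -> bool) (p : nat) := count (fun t => ~~ sg t) (iota 0 p).

Definition skip (a b t : nat) := if t < a then t else t + (b - a).

Lemma map_skip_iota a b p : a <= b <= p ->
  map (skip a b) (iota 0 (p - (b - a))) = iota 0 a ++ iota b (p - b).
Proof.
move=> /andP[ab bp]; have -> : p - (b - a) = a + (p - b) by lia.
rewrite iotaD map_cat add0n; congr (_ ++ _).
  rewrite -[RHS]map_id; apply/eq_in_map => t.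
  by rewrite mem_iota /skip => /andP[_ ->].
rewrite -{3}(subnK ab) iotaDl; apply/eq_in_map => t.
by rewrite mem_iota /skip => /andP[ta _]; rewrite ltnNge ta addnC.
Qed.

Lemma neg_arcs_split sg a b p : a <= b <= p ->
  neg_arcs sg p = neg_arcs (fun t => sg (a + t)) (b - a) + neg_arcs (sg \o skip a b) (p - (b - a)).
Proof.
move=> /andP[ab bp]; rewrite /neg_arcs -[in RHS](count_map (skip a b) (fun t => ~~ sg t)).
rewrite -[in RHS](count_map (addn a) (fun t => ~~ sg t)) -iotaDl addn0 map_skip_iota ?ab //.
have -> : iota 0 p = iota 0 a ++ iota a (b - a) ++ iota b (p - b).
  by rewrite -[in iota b _](subnKC ab) -!iotaD; congr iota; lia.
rewrite !count_cat; lia.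
Qed.

Lemma closed_walk_split h sg p a b : closed_walk h sg p -> a < b < p -> h a = h b ->
  closed_walk (fun t => h (a + t)) (fun t => sg (a + t)) (b - a) /\
  closed_walk (h \o skip a b) (sg \o skip a b) (p - (b - a)).
Proof.
case=> p0 hp har /andP[ab bp] hab; split; split.
- by lia.
- by rewrite subnKC ?addn0 // ltnW.
- by move=> t tba; rewrite addnS; apply: har; lia.
- by lia.
- rewrite /= /skip ifN ?subnK ?hp; [|lia..].
  by case: (posnP a) => [a0|//]; rewrite a0 /= subn0 -hab a0.
move=> t tp; rewrite /= /skip; case: (ltngtP t.+1 a) => ta.
- by apply: har; lia.
- by rewrite addSn; apply: har; lia.
- by rewrite ta subnKC ?(ltnW ab) // -hab -ta; apply: har; lia.
Qed.

Lemma closed_walk_shorten h sg p : closed_walk h sg p ->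
  exists h' sg' p', [/\ closed_walk h' sg' p', uniq (mkseq h' p') &
                        odd (neg_arcs sg p) -> odd (neg_arcs sg' p')].
Proof.
elim: p {-2}p (leqnn p) h sg => [|m IH] p pm h sg cw; first by case: cw; lia.
have [U|] := boolP (uniq (mkseq h p)); first by exists h, sg, p.
case/(uniqPn (h 0)) => a [b []]; rewrite size_mkseq => ab bp.
rewrite !nth_mkseq ?(ltn_trans ab) // => hab.
have [cw_in cw_out] := closed_walk_split cw (introT andP (conj ab bp)) hab.
rewrite (@neg_arcs_split _ a b); last by rewrite (ltnW ab) ltnW.
have [l_in l_out] : b - a <= m /\ p - (b - a) <= m by lia.
have [o_out|e_out] := boolP (odd (neg_arcs (sg \o skip a b) (p - (b - a)))).
  have [h' [sg' [p' [cw' U' o']]]] := IH _ l_out _ _ cw_out.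
  by exists h', sg', p'; split => // _; apply: o'.
have [h' [sg' [p' [cw' U' o']]]] := IH _ l_in _ _ cw_in.
by exists h', sg', p'; split => //; rewrite oddD (negbTE e_out) addbF.
Qed.

End ClosedWalks.

Lemma closed_walk_mono (T : eqType) (E E' : bool -> T -> T -> Prop) h sg p :
  (forall s j i, E s j i -> E' s j i) -> closed_walk E h sg p -> closed_walk E' h sg p.
Proof. by move=> EE' [p0 hp har]; split=> // k /har/EE'. Qed.

Lemma closed_walk_of_pred (T : finType) (E : bool -> T -> T -> Prop) (Q : pred T)
    (g : T -> T) (sg0 : T -> bool) x :
  Q x -> (forall i, Q i -> Q (g i) /\ E (sg0 i) (g i) i) ->
  exists h sg p, closed_walk E h sg p.
Proof.
move=> Qx Qg; have Qiter k : Q (iter k g x) by elim: k => //= k /Qg[].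
have : looping g x #|T|.
  apply/negPn; rewrite -looping_uniq; apply/negP => U.
  by have := max_card (mem (traject g x #|T|.+1)); rewrite (card_uniqP U) size_traject ltnn.
case/trajectP => a aT iter_a; set b := #|T| in aT iter_a.
exists (fun t => iter (b - t) g x), (fun t => sg0 (iter (b - t.+1) g x)), (b - a).
split; first by rewrite subn_gt0.
  by rewrite subKn ?subn0 // ltnW.
move=> t tba; have -> : b - t = (b - t.+1).+1 by lia.
exact: (Qg _ (Qiter _)).2.
Qed.

Lemma odd_count_changes (a : nat -> bool) p :
  odd (count (fun t => a t != a t.+1) (iota 0 p)) = a 0 (+) a p.
Proof.
elim: p => [|p IH]; first by rewrite addbb.
rewrite -addn1 iotaD count_cat oddD IH /= addn0 addn1.
by case: (a 0); case: (a p); case: (a p.+1).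
Qed.

Lemma cycle_of_closed_walk n (f : BN n) h sg p :
  closed_walk (Defs.arc f) h sg p -> uniq (mkseq h p) ->
  is_cycle f (mkseq h p) (mkseq sg p) /\ cycle_sign (mkseq sg p) = ~~ odd (neg_arcs sg p).
Proof.
case=> p0 hp har U; split; last by rewrite /cycle_sign /neg_arcs count_map.
split; rewrite ?size_mkseq // => k d kp; rewrite !nth_mkseq ?ltn_pmod //.
case: (ltngtP k.+1 p) => [kp'|pk|kp']; first by rewrite modn_small //; apply: har.
  by lia.
by rewrite kp' modnn -hp -kp'; apply: har.
Qed.

Lemma setcE n (x : conf n) j b k : setc x j b k = if k == j then b else x k.
Proof. exact: ffunE. Qed.

Lemma setc_id n (x : conf n) j : setc x j (x j) = x.
Proof. by apply/ffunP => k; rewrite setcE; case: eqP => // ->. Qed.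

Lemma setc_setc n (x : conf n) j a b : setc (setc x j a) j b = setc x j b.
Proof. by apply/ffunP => k; rewrite !setcE; case: eqP. Qed.

Lemma setc_same n (x : conf n) j b : setc x j b j = b.
Proof. by rewrite setcE eqxx. Qed.

Definition no_neg_cycle n (f : BN n) := forall vs ss, is_cycle f vs ss -> cycle_sign ss.

Section Subcube.
Variables (n : nat) (f : BN n) (P : {set 'I_n}) (t : conf n).

Definition const_on (i : 'I_n) := exists c, forall x : conf n, {in P, x =1 t} -> f x i = c.

(* Signed arcs of the subnetwork obtained by fixing the components in [P] to [t]. *)
Definition subarc (s : bool) (j i : 'I_n) :=
  [&& j \notin P, i \notin P & [exists x : conf n, [&& [forall k in P, x k == t k],
      f (setc x j false) i == ~~ s & f (setc x j true) i == s]]].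

Lemma subarc_notinl s j i : subarc s j i -> j \notin P.
Proof. by case/and3P. Qed.

Lemma subarc_arc s j i : subarc s j i -> Defs.arc f s j i.
Proof.
case/and3P => _ _ /existsP[x /and3P[_ /eqP fx0 /eqP fx1]].
by exists (setc x j false); rewrite setc_same setc_setc.
Qed.

Lemma subarc_flip (x : conf n) j i : j \notin P -> i \notin P -> {in P, x =1 t} ->
  f (setc x j false) i != f (setc x j true) i -> subarc (f (setc x j true) i) j i.
Proof.
move=> jP iP xt fx; rewrite /subarc jP iP; apply/existsP; exists x.
rewrite eqxx andbT (introT eqfun_inP xt).
by move: fx; case: (f (setc x j false) i); case: (f (setc x j true) i).
Qed.

Lemma subarc_of_neq (z x : conf n) i : i \notin P -> {in P, z =1 t} -> {in P, x =1 t} ->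
  f x i != f z i -> exists j, subarc (z j == f z i) j i.
Proof.
(* Move [x] towards [z] one coordinate at a time until [f_i] changes. *)
move=> iP zt; move Hd : #|[set k | x k != z k]| => d.
elim: d x Hd => [|d IH] x Hd xt fx.
  suff xz : x = z by rewrite xz eqxx in fx.
  apply/ffunP => k; apply/eqP/negPn/negP => xk.
  by move/cards0_eq/setP/(_ k): Hd; rewrite !inE xk.
have [j xj] : exists j, x j != z j.
  case: (pickP (fun k => x k != z k)) => [j|xz]; first by exists j.
  suff xz' : x = z by rewrite xz' eqxx in fx.
  by apply/ffunP => k; apply/eqP/negbFE/xz.
have jP : j \notin P by apply: contra xj => jP; rewrite xt // zt.
pose x' := setc x j (z j).
have x't : {in P, x' =1 t}.
  by move=> k kP; rewrite setcE; case: (k =P j) => [<-|_]; [exact: zt | exact: xt].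
have [fx'|/negPn/eqP fx'] := boolP (f x' i != f z i).
  apply: IH fx' => //; have -> : [set k | x' k != z k] = [set k | x k != z k] :\ j.
    by apply/setP => k; rewrite !inE /x' setcE; case: (k =P j) => [->|]; rewrite ?eqxx.
  by move: Hd; rewrite (cardsD1 j) inE xj add1n => -[].
have xj' : x j = ~~ z j by move: xj; case: (x j); case: (z j).
rewrite -(setc_id x j) xj' in fx; rewrite /x' in fx'.
exists j; have := subarc_flip jP iP xt; case: (z j) fx fx' => /= fx fx'.
  by rewrite [true == _]eq_sym eqb_id fx'; apply.
rewrite [false == _]eq_sym eqbF_neg -fx'; move: fx; rewrite -fx'.
by case: (f (setc x j true) i); case: (f (setc x j false) i) => // _; apply.
Qed.

Lemma subarc_of_nonconst (z : conf n) i : i \notin P -> ~ const_on i -> {in P, z =1 t} ->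
  exists j, subarc (z j == f z i) j i.
Proof.
move=> iP nc zt; have [x [xt fx]] : exists x : conf n, {in P, x =1 t} /\ f x i != f z i.
  apply: NNPP => none; apply: nc; exists (f z i) => x xt.
  by apply/eqP/negPn/negP => fx; apply: none; exists x.
exact: subarc_of_neq iP zt xt fx.
Qed.

Lemma cycle_of_nonconst (z : conf n) r : r \notin P -> (forall i, i \notin P -> ~ const_on i) ->
  {in P, z =1 t} -> exists vs ss, is_cycle f vs ss /\ (fixed_point f z -> cycle_sign ss).
Proof.
move=> rP nc zt.
have /fin_all_exists[g gP] : forall i, exists j, i \notin P -> subarc (z j == f z i) j i.
  move=> i; have [iP|iP] := boolP (i \in P); first by exists i.
  by have [j] := subarc_of_nonconst iP (nc i iP) zt; exists j.
pose E s j i := subarc s j i /\ s = (z j == f z i).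
have gE i : i \notin P -> g i \notin P /\ E (z (g i) == f z i) (g i) i.
  by move=> /gP a; split; [exact: subarc_notinl a | split].
have [h [sg [p cw]]] := closed_walk_of_pred (Q := [pred i | i \notin P]) rP gE.
have [h' [sg' [p' [cw' U _]]]] := closed_walk_shorten cw.
have E_arc s j i : E s j i -> Defs.arc f s j i by case=> /subarc_arc.
have [cy sgn] := cycle_of_closed_walk (closed_walk_mono E_arc cw') U.
(* When [z] is a fixed point the signs [z j == z i] telescope along the cycle. *)
exists (mkseq h' p'), (mkseq sg' p'); split=> // zfix; rewrite sgn; case: cw' => _ hp har.
rewrite /neg_arcs (eq_in_count (a2 := fun k => z (h' k) != z (h' k.+1))).
  by rewrite (odd_count_changes (fun k => z (h' k))) hp addbb.
by move=> k; rewrite mem_iota => /andP[_ /har[_ ->]]; rewrite zfix.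
Qed.

(* The sign [b] of a walk is [true] iff the walk has an even number of negative arcs. *)
Inductive swalk : 'I_n -> 'I_n -> bool -> Prop :=
| swalk0 v : swalk v v true
| swalkS s u j v b : subarc s u j -> swalk j v b -> swalk u v (s == b).

Lemma swalk_cat u v w b c : swalk u v b -> swalk v w c -> swalk u w (b == c).
Proof.
elim=> [//|s u' j v' b' a _ IH] /IH W.
have -> : (s == b') == c = (s == (b' == c)) by case: s b' c {a IH W} => [] [] [].
exact: swalkS a W.
Qed.

Lemma closed_walk_of_swalk u v b : swalk u v b -> exists h sg p,
  [/\ h 0 = u, h p = v, forall k, k < p -> subarc (sg k) (h k) (h k.+1) &
      b = ~~ odd (neg_arcs sg p)].
Proof.
elim=> [v'|s u' j v' b' a _ [h [sg [p [h0 hp har ->]]]]].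
  by exists (fun _ => v'), (fun _ => true), 0.
exists (fun k => if k is k'.+1 then h k' else u'),
  (fun k => if k is k'.+1 then sg k' else s), p.+1; split => //.
  by case=> [|k] kp /=; [rewrite h0 | apply: har].
rewrite /neg_arcs -add1n iotaD count_cat (iotaDl 1 0) count_map /= oddD.
by case: s {a}; case: (odd _).
Qed.

Definition subedge j i := [exists s, subarc s j i].

Lemma swalk_of_connect u v : connect subedge u v -> exists b, swalk u v b.
Proof.
case/connectP => p; elim: p u => [|w p IH] u /=; first by move=> _ ->; exists true; apply: swalk0.
case/andP => /existsP[s a] /IH/[apply] -[b W].
by exists (s == b); apply: swalkS a W.
Qed.

Lemma connect_notin j r : connect subedge j r -> r \notin P -> j \notin P.
Proof.
case/connectP => [[|w p]] /=; first by move=> _ ->.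
by case/andP => /existsP[s /subarc_notinl].
Qed.

Definition pred_closed (S : {set 'I_n}) := forall s j i, subarc s j i -> i \in S -> j \in S.

Definition balanced (S : {set 'I_n}) (s : conf n) :=
  forall sg j i, j \in S -> i \in S -> subarc sg j i -> sg = (s j == s i).

Lemma balanced_negb S s : balanced S s -> balanced S [ffun k => ~~ s k].
Proof.
move=> bal sg j i jS iS /(bal _ _ _ jS iS) ->.
by rewrite !ffunE; case: (s j); case: (s i).
Qed.

Lemma balanced_fixed (S : {set 'I_n}) (s y : conf n) :
  [disjoint S & P] -> pred_closed S -> balanced S s ->
  (forall i, i \in S -> ~ const_on i) -> {in P, y =1 t} -> {in S, y =1 s} ->
  {in S, forall i, f y i = y i}.
Proof.
move=> SP cl bal nc yt ys i iS.
have [j a] := subarc_of_nonconst (negbT (disjointFr SP iS)) (nc i iS) yt.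
have jS := cl _ _ _ a iS; move: (bal _ _ _ jS iS a); rewrite !ys //.
by case: (s j); case: (s i); case: (f y i).
Qed.

Section NoNegativeCycle.
Hypothesis no_neg : no_neg_cycle f.

Lemma swalk_loop u b : swalk u u b -> b.
Proof.
case/closed_walk_of_swalk => h [sg [p [h0 hp har ->]]]; apply/negP => odd_p.
have cw : closed_walk subarc h sg p by split; rewrite ?hp ?h0 //; case: p odd_p {hp har}.
have [h' [sg' [p' [cw' U /(_ odd_p) odd']]]] := closed_walk_shorten cw.
have [cy sgn] := cycle_of_closed_walk (closed_walk_mono subarc_arc cw') U.
by move: (no_neg cy); rewrite sgn odd'.
Qed.

Lemma balanced_of_source r : (forall j, connect subedge j r -> connect subedge r j) ->
  exists s, balanced [set j | connect subedge j r] s.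
Proof.
move=> src; have sign_uniq i b1 b2 : connect subedge i r -> swalk r i b1 -> swalk r i b2 -> b1 = b2.
  move=> /swalk_of_connect[c W] W1 W2.
  by move: (swalk_loop (swalk_cat W1 W)) (swalk_loop (swalk_cat W2 W)) => /eqP-> /eqP->.
have /fin_all_exists[s sP] : forall i, exists b, connect subedge i r -> swalk r i b.
  move=> i; have [/src/swalk_of_connect[b W]|_] := boolP (connect subedge i r).
    by exists b.
  by exists true.
exists [ffun i => s i] => sg j i; rewrite !inE !ffunE => jr ir a.
have W := swalk_cat (sP j jr) (swalkS a (swalk0 i)); rewrite eqb_id in W.
by rewrite -(sign_uniq i _ _ ir W (sP i ir)); case: sg {a W}; case: (s j).
Qed.

Lemma source_component r0 : r0 \notin P ->
  exists S s, [/\ S != set0, [disjoint S & P], pred_closed S & balanced S s].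
Proof.
(* A free vertex with fewest ancestors lies in an initial strongly connected component. *)
move=> r0P; pose anc r := [set j | connect subedge j r].
have [r rP rmin] := @arg_minnP _ r0 [pred r | r \notin P] (fun r => #|anc r|) r0P.
have src j : connect subedge j r -> connect subedge r j.
  move=> jr; have sub : anc j \subset anc r.
    by apply/subsetP => k; rewrite !inE => kj; apply: connect_trans kj jr.
  have /eqP anc_eq : anc j == anc r by rewrite eqEcard sub rmin //= (connect_notin jr).
  have : r \in anc j by rewrite anc_eq inE connect0.
  by rewrite inE.
have [s bal] := balanced_of_source src.
exists (anc r), s; split=> //.
- by apply/set0Pn; exists r; rewrite inE connect0.
- by rewrite disjoint_subset; apply/subsetP => k; rewrite !inE => /connect_notin; apply.
- move=> sg j i a; rewrite !inE; apply: connect_trans.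
  by apply: connect1; apply/existsP; exists sg.
Qed.

End NoNegativeCycle.

End Subcube.

Definition fixed_outside n (f : BN n) (P : {set 'I_n}) (y : conf n) :=
  forall i, i \notin P -> f y i = y i.

Lemma fixed_outside_extend n (f : BN n) (P Q : {set 'I_n}) (t u : conf n) :
  [disjoint Q & P] ->
  (forall y : conf n, {in P, y =1 t} -> {in Q, y =1 u} -> {in Q, forall i, f y i = y i}) ->
  (exists y : conf n, {in Q :|: P, y =1 [ffun k => if k \in Q then u k else t k]} /\
             fixed_outside f (Q :|: P) y) ->
  exists y : conf n, [/\ {in P, y =1 t}, {in Q, y =1 u} & fixed_outside f P y].
Proof.
move=> QP fixQ [y [y_ut fy]].
have yt : {in P, y =1 t}.
  move=> k kP; rewrite y_ut ?inE ?kP ?orbT // ffunE.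
  by case: ifP => // kQ; rewrite (disjointFr QP kQ) in kP.
have yu : {in Q, y =1 u} by move=> k kQ; rewrite y_ut ?inE ?kQ // ffunE kQ.
exists y; split=> // i iP; have [iQ|iQ] := boolP (i \in Q); first exact: fixQ.
by apply: fy; rewrite inE negb_or iQ.
Qed.

Lemma card_setCU_lt n (P Q : {set 'I_n}) : [disjoint Q & P] -> Q != set0 ->
  #|~: (Q :|: P)| < #|~: P|.
Proof.
move=> QP /set0Pn[k kQ]; apply: proper_card; apply/properP; split.
  by rewrite setCU subsetIr.
by exists k; rewrite !inE ?kQ // (disjointFr QP kQ).
Qed.

Lemma subcube_fixed_point n (f : BN n) : no_neg_cycle f ->
  forall (P : {set 'I_n}) (t : conf n), exists y : conf n, {in P, y =1 t} /\ fixed_outside f P y.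
Proof.
move=> no_neg P t; move: {2}#|~: P| (leqnn #|~: P|) => d.
elim: d P t => [|d IH] P t Pd.
  exists t; split=> // i iP; move: Pd; rewrite leqn0 => /eqP/cards0_eq/setP/(_ i).
  by rewrite !inE iP.
have [r rP|full] := pickP [pred r | r \notin P]; last first.
  by exists t; split=> // i iP; move: (full i); rewrite /= iP.
have step (Q : {set 'I_n}) (u : conf n) : [disjoint Q & P] -> Q != set0 ->
    (forall y : conf n, {in P, y =1 t} -> {in Q, y =1 u} -> {in Q, forall i, f y i = y i}) ->
    exists y : conf n, {in P, y =1 t} /\ fixed_outside f P y.
  move=> QP Q0 fixQ; have Qd : #|~: (Q :|: P)| <= d.
    by rewrite -ltnS (leq_trans (card_setCU_lt QP Q0)).
  by have [y [yt _ fy]] := fixed_outside_extend QP fixQ (IH _ _ Qd); exists y.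
have [[i [iP [c ic]]]|nonconst] := classic (exists i, i \notin P /\ const_on f P t i).
  apply: (step [set i] [ffun _ => c]); first by rewrite disjoints1.
    by apply/set0Pn; exists i; rewrite set11.
  by move=> y yt yc k; rewrite inE => /eqP ->; rewrite ic // yc ?set11 // ffunE.
have [S [s [S0 SP cl bal]]] := source_component t no_neg rP.
apply: (step S s) => // y yt ys; apply: (balanced_fixed SP cl bal) => // i iS iconst.
by apply: nonconst; exists i; rewrite (disjointFr SP iS).
Qed.

Lemma fixed_point_upd_word n (f : BN n) w (x : conf n) : fixed_point f x -> upd_word f w x = x.
Proof.
move=> fx; elim: w x fx => [//|i w IH] x fx /=.
by rewrite /upd fx setc_id; apply: IH.
Qed.

Lemma sync_fixed_point_uniq n (f : BN n) w (x y : conf n) :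
  synchronizes w f -> fixed_point f x -> fixed_point f y -> x = y.
Proof.
case=> c wc /(fixed_point_upd_word w) <- /(fixed_point_upd_word w) <-.
by rewrite !wc.
Qed.

Definition forcing n (f : BN n) (pi : seq 'I_n) (t : conf n) :=
  forall pre i suf, pi = pre ++ i :: suf -> forall x : conf n, {in pre, x =1 t} -> f x i = t i.

Lemma mem_split (T : eqType) (x : T) s : x \in s -> exists pre suf, s = pre ++ x :: suf.
Proof. by case/splitPr => pre suf; exists pre, suf. Qed.

Lemma mem_uniq_ord n (pi : seq 'I_n) j : uniq pi -> size pi = n -> j \in pi.
Proof.
move=> U sp; apply/negPn/negP => jpi.
suff : size (j :: pi) <= size (enum 'I_n) by rewrite /= sp size_enum_ord ltnn.
by apply: uniq_leq_size => [|k _]; rewrite ?mem_enum //= jpi U.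
Qed.

Lemma exists_notin_short n (pi : seq 'I_n) : size pi < n -> exists r, r \notin pi.
Proof.
move=> sp; apply/existsP; rewrite -negb_forall; apply: contraTN sp => /forallP allin.
rewrite -leqNgt (leq_trans _ (card_size pi)) // -{1}(card_ord n) subset_leq_card //.
by apply/subsetP => j _; apply: allin.
Qed.

Section Forcing.
Variables (n : nat) (f : BN n) (pi : seq 'I_n) (t : conf n).
Hypothesis F : forcing f pi t.

Lemma upd_agree_prefix pre suf i (x : conf n) : pi = pre ++ suf ->
  {in pre, x =1 t} -> {in pre, upd f i x =1 t}.
Proof.
move=> pi_eq xt j jpre; rewrite /upd setcE; case: (j =P i) => [<-|_]; last exact: xt.
case/splitPr: jpre pi_eq xt => pre1 pre2 pi_eq xt.
apply: (F (pre := pre1) (suf := pre2 ++ suf)); first by rewrite pi_eq -catA.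
by move=> k kpre; apply: xt; rewrite mem_cat kpre.
Qed.

Lemma forcing_sync w pre suf (x : conf n) : pi = pre ++ suf -> {in pre, x =1 t} ->
  subseq suf w -> {in pi, upd_word f w x =1 t}.
Proof.
elim: w pre suf x => [|i w IH] pre suf x pi_eq xt.
  by rewrite subseq0 => /eqP suf0; rewrite pi_eq suf0 cats0.
have xt' := upd_agree_prefix i pi_eq xt.
case: suf pi_eq xt' => [|a suf] pi_eq xt' /=.
  by move=> _; apply: (IH pre [::]); rewrite ?sub0seq.
case: (a =P i) xt' => [<-|_] xt' sub; last exact: (IH pre (a :: suf)).
apply: (IH (rcons pre a) suf) => //; first by rewrite cat_rcons.
move=> j; rewrite mem_rcons inE => /orP[/eqP->|]; last exact: xt'.
by rewrite /upd setc_same; apply: F pi_eq x xt.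
Qed.

Lemma forcing_fixed_in (y : conf n) : {in pi, y =1 t} -> {in pi, forall i, f y i = y i}.
Proof.
move=> yt i /mem_split[pre [suf pi_eq]]; rewrite (F pi_eq) ?yt ?pi_eq ?mem_cat ?mem_head ?orbT //.
by move=> k kpre; apply: yt; rewrite pi_eq mem_cat kpre.
Qed.

Lemma forcing_complete_sync w : complete w -> uniq pi -> size pi = n -> synchronizes w f.
Proof.
move=> C U sp; exists t => x; apply/ffunP => j.
by apply: (forcing_sync (pre := [::]) (suf := pi)) => //; [apply: C | apply: mem_uniq_ord].
Qed.

Lemma forcing_fixed_point (z : conf n) : fixed_point f z -> {in pi, z =1 t}.
Proof.
move=> zfix j jpi; rewrite -(fixed_point_upd_word pi zfix).
exact: (forcing_sync (pre := [::]) (suf := pi)).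
Qed.

End Forcing.

Lemma forcing_rcons n (f : BN n) pi t i c : forcing f pi t -> i \notin pi ->
  (forall x : conf n, {in [set j in pi], x =1 t} -> f x i = c) ->
  forcing f (rcons pi i) (setc t i c).
Proof.
move=> F ipi ic pre a suf; case/lastP: suf => [|suf b].
  rewrite cats1 => /rcons_inj[<- <-] x xt; rewrite setc_same; apply: ic => k.
  by rewrite inE => kpi; rewrite xt // setcE; case: (k =P i) kpi => // ->; rewrite (negPf ipi).
rewrite -rcons_cons -rcons_cat => /rcons_inj[pi_eq _] x xt.
have ai : a != i by apply: contraNneq ipi => <-; rewrite pi_eq mem_cat mem_head orbT.
rewrite setcE (negPf ai); apply: (F _ _ _ pi_eq) => k kpre.
rewrite xt // setcE; case: (k =P i) kpre => // -> ipre.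
by rewrite pi_eq mem_cat ipre in ipi.
Qed.

Definition extensible n (f : BN n) := forall pi t, forcing f pi t -> size pi < n ->
  exists2 i, i \notin pi & const_on f [set j in pi] t i.

Lemma forcing_perm_of_extensible n (f : BN n) : extensible f ->
  exists (pi : seq 'I_n) t, [/\ uniq pi, size pi = n & forcing f pi t].
Proof.
move=> X; suff : forall k, k <= n -> exists pi t, [/\ uniq pi, size pi = k & forcing f pi t].
  by apply.
elim=> [_|k IH kn].
  by exists [::], [ffun=> false]; split=> // -[].
have [pi [t [U sp F]]] := IH (ltnW kn).
have [|i ipi [c ic]] := X pi t F; first by rewrite sp.
exists (rcons pi i), (setc t i c); split; first by rewrite rcons_uniq ipi U.
  by rewrite size_rcons sp.
exact: forcing_rcons.
Qed.

Lemma extensible_by_contra n (f : BN n) :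
  (forall pi t r, forcing f pi t -> r \notin pi ->
     (forall i, i \notin [set j in pi] -> ~ const_on f [set j in pi] t i) -> False) ->
  extensible f.
Proof.
move=> H pi t F sp; apply: NNPP => none; have [r rpi] := exists_notin_short sp.
by apply: (H pi t r F rpi) => i; rewrite inE => ipi ic; apply: none; exists i.
Qed.

Lemma extensible_of_in_A n (f : BN n) : in_A f -> extensible f.
Proof.
move=> acyclic; apply: extensible_by_contra => pi t r _ rpi nonconst.
have rP : r \notin [set j in pi] by rewrite inE.
have [vs [ss [cy _]]] := cycle_of_nonconst (z := t) rP nonconst (fun _ _ => erefl).
exact: acyclic cy.
Qed.

Lemma extensible_of_in_F n (f : BN n) : in_F f -> extensible f.
Proof.
move=> [[z [zfix zuniq]] same_sign]; apply: extensible_by_contra => pi t r F rpi nonconst.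
set P := [set j in pi] in nonconst; have rP : r \notin P by rewrite inE.
have zt : {in P, z =1 t} by move=> j; rewrite inE; apply: (forcing_fixed_point F zfix).
have [vs [ss [cy /(_ zfix) pos]]] := cycle_of_nonconst rP nonconst zt.
have no_neg : no_neg_cycle f by move=> vs' ss' cy'; rewrite (same_sign _ _ _ _ cy' cy).
have [S [s [S0 SP cl bal]]] := source_component t no_neg rP.
have fixed_with u : balanced f P t S u -> exists2 y, fixed_point f y & {in S, y =1 u}.
  move=> bal_u; have fixS (y : conf n) : {in P, y =1 t} -> {in S, y =1 u} ->
      {in S, forall i, f y i = y i}.
    move=> yt yu; apply: (balanced_fixed SP cl bal_u) => // i iS.
    by apply: nonconst; rewrite (disjointFr SP iS).
  have [y [yt yu fy]] := fixed_outside_extend SP fixS (subcube_fixed_point no_neg _ _).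
  exists y => //; apply/ffunP => i; have [iP|] := boolP (i \in P); last exact: fy.
  apply: (forcing_fixed_in F) => [k kpi|]; last by rewrite inE in iP.
  by apply: yt; rewrite inE.
have [y1 fix1 y1s] := fixed_with s bal; have [y2 fix2 y2s] := fixed_with _ (balanced_negb bal).
case/set0Pn: S0 => k kS; move: (y2s k kS); rewrite -(zuniq _ fix2) (zuniq _ fix1) y1s // ffunE.
by case: (s k).
Qed.

Lemma in_F_of_in_Fplus n (f : BN n) : in_Fplus f -> in_F f.
Proof.
move=> [[w wsync] pos]; split; last by move=> vs ss vs' ss' /pos-> /pos->.
have [y [_ fy]] := subcube_fixed_point pos set0 [ffun=> false].
have yfix : fixed_point f y by apply/ffunP => i; apply: fy; rewrite inE.
by exists y; split=> // x xfix; apply: sync_fixed_point_uniq wsync yfix xfix.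
Qed.

Lemma acyclic_of_rank n (f : BN n) (rank : 'I_n -> nat) :
  (forall s j i, Defs.arc f s j i -> rank j < rank i) -> in_A f.
Proof.
move=> up vs ss [+ _ _ arcs]; case: vs arcs => [//|v vs] arcs _; set k := size (v :: vs).
have rank_ge m : m < k -> rank v + m <= rank (nth v (v :: vs) m).
  elim: m => [|m IH] mk; first by rewrite addn0.
  have := up _ _ _ (arcs m v (ltnW mk)); rewrite modn_small // addnS.
  exact/leq_ltn_trans/IH/ltnW.
have := up _ _ _ (arcs k.-1 v (ltnSn _)); rewrite prednK // modnn /=.
by have := rank_ge _ (ltnSn (size vs)); lia.
Qed.

Lemma in_F_of_acyclic n (f : BN n) w c :
  in_A f -> synchronizes w f -> fixed_point f c -> in_F f.
Proof.
move=> acyclic wsync cfix; split; last by move=> vs ss vs' ss' /acyclic.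
by exists c; split=> // x xfix; apply: sync_fixed_point_uniq wsync cfix xfix.
Qed.

Lemma in_Fplus_of_acyclic n (f : BN n) w : in_A f -> synchronizes w f -> in_Fplus f.
Proof. by move=> acyclic wsync; split; [exists w | move=> vs ss /acyclic]. Qed.

Section PathNetwork.
Variables (n : nat) (p : seq 'I_n).
Hypotheses (p_uniq : uniq p) (p_size : size p = n).

Definition path_net : BN n :=
  fun x => [ffun i => if index i p is k.+1 then x (nth i p k) else true].

Definition ones : conf n := [ffun=> true].

Lemma path_netE x i : path_net x i = if index i p is k.+1 then x (nth i p k) else true.
Proof. exact: ffunE. Qed.

Lemma path_net_arc s j i : Defs.arc path_net s j i -> index j p < index i p.
Proof.
case=> x [_ []]; rewrite !path_netE; case ip : (index i p) => [|k]; first by case: s.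
rewrite setcE; case: eqP => [<- _ _|_ ->]; last by case: s.
by rewrite index_uniq // (leq_trans _ (index_size i p)) // ip.
Qed.

Lemma path_net_acyclic : in_A path_net.
Proof. exact: acyclic_of_rank path_net_arc. Qed.

Lemma ones_fixed : fixed_point path_net ones.
Proof. by apply/ffunP => i; rewrite path_netE ffunE; case: (index i p) => // k; rewrite ffunE. Qed.

Lemma path_net_forcing : forcing path_net p ones.
Proof.
move=> pre i suf p_eq x xt; rewrite path_netE ffunE.
have -> : index i p = size pre.
  move: p_uniq; rewrite p_eq index_cat cat_uniq /= => /and3P[_ /norP[/negPf-> _] _].
  by rewrite eqxx addn0.
case: pre p_eq xt => [//|a pre] p_eq xt /=.
by rewrite xt ?ffunE // p_eq nth_cat /= ltnSn mem_nth.
Qed.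

Lemma path_net_sync : synchronizes p path_net.
Proof.
exists ones => x; apply/ffunP => j.
by rewrite (forcing_sync path_net_forcing (pre := [::]) (suf := p)) ?mem_uniq_ord.
Qed.

Lemma path_net_pred_false pre a s i (x : conf n) : p = pre ++ a :: s -> i \in s ->
  {in a :: s, forall j, ~~ x j} -> ~~ path_net x i.
Proof.
move=> p_eq i_s xs; move: p_uniq; rewrite p_eq cat_uniq /= => /and3P[_ /norP[_ pre_s] /andP[a_s _]].
have ipre : i \notin pre by apply: contra pre_s => ipre; apply/hasP; exists i.
have ai : a != i by apply: contraNneq a_s => ->.
rewrite path_netE p_eq index_cat (negPf ipre) /= (negPf ai) addnS nth_cat ltnNge leq_addr /=.
by rewrite addKn; apply: xs; rewrite mem_nth //= ltnS index_size.
Qed.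

(* A 1 can enter the suffix [s] of [p] only through its first element. *)
Lemma path_net_stuck w pre s (x : conf n) : p = pre ++ s -> {in s, forall j, ~~ x j} ->
  ~~ subseq s w -> exists j, ~~ upd_word path_net w x j.
Proof.
elim: w pre s x => [|i w IH] pre [|a s] x p_eq xs //=.
  by move=> _; exists a; apply: xs; rewrite mem_head.
case: (a =P i) => [<-|ai] sub.
  apply: (IH (rcons pre a) s) => //; first by rewrite cat_rcons.
  move=> j js; rewrite setcE; case: (j =P a) => [ja|_]; last by apply: xs; rewrite inE js orbT.
  by move: p_uniq; rewrite p_eq cat_uniq /= -ja js /= !andbF.
apply: (IH pre (a :: s)) => // j js; rewrite setcE; case: (j =P i) => [ji|_]; last exact: xs.
apply: (path_net_pred_false p_eq) => //; move: js; rewrite inE ji; case: eqP => // ia.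
by case: ai.
Qed.

Lemma path_net_not_sync w : ~~ subseq p w -> ~ synchronizes w path_net.
Proof.
move=> psub [c wc].
have [j] := path_net_stuck (pre := [::]) (x := [ffun=> false]) erefl
  (fun j _ => negbT (ffunE _ _)) psub.
by rewrite wc -(wc ones) fixed_point_upd_word ?ffunE //; exact: ones_fixed.
Qed.

End PathNetwork.

Lemma complete_iff_sync n (w : seq 'I_n) (C : BN n -> Prop) :
  (forall f, C f -> extensible f) ->
  (forall p, uniq p -> size p = n -> C (path_net p)) ->
  complete w <-> (forall f, C f -> synchronizes w f).
Proof.
move=> ext C_path; split=> [wc f /ext/forcing_perm_of_extensible[pi [t [U sp F]]]|wsync].
  exact: (forcing_complete_sync F wc U sp).
move=> p U sp; apply/negPn/negP => psub.
exact: (path_net_not_sync U psub (wsync _ (C_path p U sp))).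
Qed.

Theorem proposition10 (n : nat) (w : seq 'I_n) :
  (complete w <-> (forall f : BN n, in_F f -> synchronizes w f)) /\
  (complete w <-> (forall f : BN n, in_Fplus f -> synchronizes w f)) /\
  (complete w <-> (forall f : BN n, in_A f -> synchronizes w f)).
Proof.
split; [|split]; apply: complete_iff_sync.
- exact: extensible_of_in_F.
- move=> p U sp; have acyclic := path_net_acyclic U.
  exact: in_F_of_acyclic acyclic (path_net_sync U sp) (ones_fixed p).
- by move=> f /in_F_of_in_Fplus/extensible_of_in_F.
- by move=> p U sp; apply: in_Fplus_of_acyclic (path_net_acyclic U) (path_net_sync U sp).
- exact: extensible_of_in_A.
- by move=> p U _; apply: path_net_acyclic.
Qed.
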